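(* In the twisted Yangian $Y^+(\mathfrak{gl}_{2n+1})$, with $\hat n=n+1$, for every $1\le k\le n$ one has, as an identity of formal series in $u^{-1},v^{-1}$ (rational coefficients expanded accordingly), $$s_{\hat n\hat n}(v)\,s_{k\hat n}(u)=f^-(v,u)\,f^+(v,\tilde u)\,s_{k\hat n}(u)\,s_{\hat n\hat n}(v)-\Big(\frac{p(v)}{u-v}\,s_{k\hat n}(v)+\frac{p(\tilde v)}{u-\tilde v}\,s_{k\hat n}(\tilde v)\Big)s_{\hat n\hat n}(u),$$ where $p(v):=1+\frac{1}{v-\tilde v}$.
   Context: Fix $n\ge1$, $N=2n+1$, $\hat n=n+1$ (orthogonal case, upper signs). Fix $\rho\in\mathbb C$ and write $\tilde u:=-u-\rho$, $\tilde v:=-v-\rho$. Let $f^\pm(u,v):=\frac{u-v\pm1}{u-v}$. For $k\in\mathbb N$ let $E^{(k)}_{ij}$ be matrix units of $\mathrm{End}(\mathbb C^k)$, $P^{(k,k)}=\sum_{i,j}E^{(k)}_{ij}\otimes E^{(k)}_{ji}$, $R^{(k,k)}(u)=I-u^{-1}P^{(k,k)}$. $Y^+(\mathfrak{gl}_{2n+1})$ is generated by $s_{ij}[r]$, $1\le i,j\le 2n+1$, $r\ge1$, with $s_{ij}(u)=\delta_{ij}+\sum_{r\ge1}s_{ij}[r]u^{-r}$. Let $\alpha(i)=i$ for $i\le n+1$ and $\alpha(i)=i-1$ for $i>n+1$, and $S(u):=\sum_{i,j=1}^{2n+2}E^{(2n+2)}_{ij}\otimes s_{\alpha(i)\alpha(j)}(u)$.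 Let $\hat\omega(E^{(2n+2)}_{ij})=E^{(2n+2)}_{\bar j\bar i}$ with $\bar i=2n+3-i$, $\hat S=\hat\omega(S)$, $\hat R=(\mathrm{id}\otimes\hat\omega)(R^{(2n+2,2n+2)})$. Defining relations: $R_{12}(u-v)S_1(u)\hat R_{12}(\tilde v-u)S_2(v)=S_2(v)\hat R_{12}(\tilde v-u)S_1(u)R_{12}(u-v)$ with $R=R^{(2n+2,2n+2)}$, and $\hat S(\tilde u)=S(u)+\frac{S(u)-S(\tilde u)}{u-\tilde u}$. *)

From HB Require Import structures.
From mathcomp Require Import all_boot all_order all_algebra.
From mathcomp Require Import reals complex.
Set Implicit Arguments. Unset Strict Implicit. Unset Printing Implicit Defensive.
Import Order.TTheory GRing.Theory Num.Theory.
Local Open Scope ring_scope.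

Definition Cx (R : realType) : fieldType := (complex R).

Section TwistedYangian.
Variables (R : realType).
Local Notation C := (Cx R).
Variable (A : algType C).

(** One-variable formal series in x^{-1}: f : nat -> A, f m = coefficient of x^{-m}.
    Two-variable objects with polynomial prefactors: F : int -> int -> A,
    F i j = coefficient of u^{-i} v^{-j} (i, j may be negative). *)

Definition ext (f : nat -> A) (i : int) : A :=
  match i with Posz m => f m | Negz _ => 0 end.

(* coefficient of x^{-m} in the expansion of (-x-rho)^{-r} in powers of x^{-1} *)
Definition tcoef (rho : C) (r m : nat) : C :=
  if r == 0%N then (m == 0%N)%:R
  else if (r <= m)%N then (-1) ^+ m * ('C(m.-1, r.-1))%:R * rho ^+ (m - r)
  else 0.

(* substitution x |-> x~ := -x-rho in a series f(x) *)
Definition stilde (rho : C) (f : nat -> A) (m : nat) : A :=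
  \sum_(r < m.+1) tcoef rho r m *: f r.

Definition ser_uv (f g : nat -> A) (i j : int) : A := ext f i * ext g j.
Definition ser_vu (g f : nat -> A) (i j : int) : A := ext g j * ext f i.

(* multiplication by a polynomial p(u,v) : p : {poly {poly C}}, outer variable u,
   inner variable v *)
Definition pmul2 (p : {poly {poly C}}) (F : int -> int -> A) (i j : int) : A :=
  \sum_(k < size p) \sum_(l < size p`_k) (p`_k)`_l *: F (i + k%:Z) (j + l%:Z).

Definition pmul1 (p : {poly C}) (F : int -> A) (i : int) : A :=
  \sum_(k < size p) p`_k *: F (i + k%:Z).

Variable n : nat.
(* 0-based indices: 'I_(2n+1) for gl_{2n+1}, 'I_(2n+2) for the doubled matrix S *)
Local Notation N := (n.*2).+1.
Local Notation N2 := (n.*2).+2.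

Variable s : 'I_N -> 'I_N -> nat -> A. (* s i j r = s_{ij}[r], used for r >= 1 *)

(* s_{ij}(u) = delta_ij + sum_{r>=1} s_ij[r] u^{-r} *)
Definition sser (i j : 'I_N) (r : nat) : A :=
  if r is 0 then (i == j)%:R else s i j r.

Definition alpha (a : 'I_N2) : 'I_N := inord (if (a <= n)%N then (a : nat) else (a : nat).-1).

Definition Sent (a b : 'I_N2) : nat -> A := sser (alpha a) (alpha b).

Definition bar (a : 'I_N2) : 'I_N2 := rev_ord a.

Local Notation Idx := ('I_N2 * 'I_N2)%type.

Variable rho : C.

Local Notation pu := ('X : {poly {poly C}}).
Local Notation pv := (('X : {poly C})%:P : {poly {poly C}}).
Local Notation pc c := ((c : C)%:P%:P : {poly {poly C}}).

(* (u-v) R(u-v) = (u-v) I - P  on C^N2 (x) C^N2, entries indexed by pairs *)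
Definition Rc (x y : Idx) : {poly {poly C}} :=
  (x == y)%:R * (pu - pv) - ((x.1 == y.2) && (x.2 == y.1))%:R.
(* (v~ - u) Rhat(v~ - u) = (-u-v-rho) I - Q,  Q = sum_ij E_ij (x) E_{bar i, bar j} *)
Definition Rhc (x y : Idx) : {poly {poly C}} :=
  (x == y)%:R * (- pu - pv - pc rho) - ((x.2 == bar x.1) && (y.2 == bar y.1))%:R.

(* the RS relation, multiplied through by the central factor (u-v)(v~-u) *)
Definition RS_relation : Prop :=
  forall (a b : Idx) (i j : int),
    \sum_(x : Idx) \sum_(y : Idx) \sum_(z : Idx)
       pmul2 (Rc a x * Rhc y z * (x.2 == y.2)%:R * (z.1 == b.1)%:R)
             (ser_uv (Sent x.1 y.1) (Sent z.2 b.2)) i j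
  = \sum_(x : Idx) \sum_(y : Idx) \sum_(z : Idx)
       pmul2 ((a.1 == x.1)%:R * Rhc x y * (y.2 == z.2)%:R * Rc z b)
             (ser_vu (Sent a.2 x.2) (Sent y.1 z.1)) i j.

(* the symmetry relation  Shat(u~) = S(u) + (S(u) - S(u~))/(u - u~),
   with u - u~ = 2u + rho, multiplied through by 2u + rho;
   Shat = omegahat(S), i.e. Shat_{ab} = S_{bar b, bar a} *)
Definition symmetry_relation : Prop :=
  forall (a b : 'I_N2) (i : int),
    pmul1 ('X *+ 2 + rho%:P) (ext (stilde rho (Sent (bar b) (bar a)))) i
  = pmul1 ('X *+ 2 + (rho + 1)%:P) (ext (Sent a b)) i
    - ext (stilde rho (Sent a b)) i.

End TwistedYangian.

(* Write T = K(u)N(v), L = N(v)K(u), W = K(v)N(u), V = K~(v)N(u) with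
   K = s_{k n^}, N = s_{n^ n^}, and B = s_{n^ k'}, k' = 2n+2-k.  The RS relation
   at the entries (k n^, n^ n^) and (n^ k, n^ n^) gives two linear relations,
   with coefficients in C[u,v], between T, L, N(u)K(v), B(u)N(v), B(v)N(u) and W;
   the symmetry relation at (k, n^) and (n^, k') gives two more, involving
   V and B~(v)N(u).  Combining the RS relations eliminates N(u)K(v) and B(u)N(v)
   up to a factor u - v - 1, combining the symmetry relations eliminates
   B~(v)N(u) up to a factor 2v + rho + 1; both factors can be cancelled because
   all series are bounded below in u and v.  A last combination eliminates
   B(v)N(u) and yields the identity, multiplied by (u-v)(u+v+rho)(2v+rho). *)

From HB Require Import structures.
From mathcomp Require Import all_boot all_order all_algebra.
From mathcomp Require Import reals complex.
From mathcomp Require Import ring zify.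
Import Order.TTheory GRing.Theory Num.Theory.
Set Implicit Arguments.
Unset Strict Implicit.
Unset Printing Implicit Defensive.
Local Open Scope ring_scope.

Section PolynomialAction.
Variables (R : realType) (A : algType (Cx R)).
Local Notation C := (Cx R).
Local Notation P := {poly {poly C}}.
Local Notation pu := ('X : P).
Local Notation pv := (('X : {poly C})%:P : P).
Local Notation pc c := ((c : C)%:P%:P : P).
Local Notation ser := (int -> int -> A).

Definition inner_size (p : P) : nat := (\max_(k < size p) size (nth 0%R p k))%N.

Lemma size_coef_inner_size (p : P) k : leq (size p`_k) (inner_size p).
Proof.
case: (ltnP k (size p)) => [k_lt | k_ge]; last by rewrite nth_default ?size_poly0.
exact: (@leq_bigmax _ (fun k : 'I_(size p) => size (nth 0%R p k)) (Ordinal k_lt)).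
Qed.

Lemma sum_ord_widen (m1 m2 : nat) (f : nat -> A) : (m1 <= m2)%N ->
  (forall i, (m1 <= i)%N -> f i = 0) -> \sum_(i < m1) f i = \sum_(i < m2) f i.
Proof.
move=> le_m12 f0; rewrite -!(big_mkord xpredT f) (big_cat_nat (leq0n m1) le_m12) /=.
by rewrite [X in _ = _ + X]big_nat_cond [X in _ = _ + X]big1 ?addr0 // => i /andP[/andP[/f0]].
Qed.

Lemma pmul2_widen (K L : nat) (p : P) (F : ser) i j :
  (size p <= K)%N -> (forall k, leq (size p`_k) L) ->
  pmul2 p F i j = \sum_(k < K) \sum_(l < L) p`_k`_l *: F (i + k%:Z) (j + l%:Z).
Proof.
move=> le_pK le_pL; rewrite /pmul2.
rewrite -(@sum_ord_widen (size p) K (fun k => \sum_(l < L) p`_k`_l *: F (i + k%:Z) (j + l%:Z))) //.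
  apply: eq_bigr => k _.
  apply: (@sum_ord_widen _ L (fun l => p`_k`_l *: F (i + k%:Z) (j + l%:Z))) => // l.
  by move/(nth_default 0) ->; rewrite scale0r.
by move=> k /(nth_default 0) ->; apply: big1 => l _; rewrite coef0 scale0r.
Qed.

Lemma eq_pmul2 p (F G : ser) i j : (forall i j, F i j = G i j) ->
  pmul2 p F i j = pmul2 p G i j.
Proof. by move=> eFG; apply: eq_bigr => k _; apply: eq_bigr => l _; rewrite eFG. Qed.

Lemma pmul2_shift p (F : ser) a b i j :
  pmul2 p (fun i j => F (i + a) (j + b)) i j = pmul2 p F (i + a) (j + b).
Proof. by apply: eq_bigr => k _; apply: eq_bigr => l _; rewrite (addrAC i) (addrAC j). Qed.

Lemma pmul2_linear (a : C) p q (F : ser) i j :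
  pmul2 (pc a * p + q) F i j = a *: pmul2 p F i j + pmul2 q F i j.
Proof.
set r := pc a * p + q.
pose K := maxn (size r) (maxn (size p) (size q)).
pose L := (inner_size r + inner_size p + inner_size q)%N.
have le_L (t : P) k : t \in [:: r; p; q] -> leq (size t`_k) L.
  rewrite !inE => /or3P[] /eqP ->; apply: (leq_trans (size_coef_inner_size _ k));
  by rewrite /L; lia.
rewrite !(@pmul2_widen K L); try by rewrite /K; lia.
all: try by move=> k; apply: le_L; rewrite !inE eqxx ?orbT.
rewrite scaler_sumr -big_split; apply: eq_bigr => k _.
rewrite scaler_sumr -big_split; apply: eq_bigr => l _.
by rewrite coefD coefCM coefD coefCM scalerDl scalerA.
Qed.

Lemma pmul20 (F : ser) i j : pmul2 0 F i j = 0.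
Proof. by rewrite /pmul2 size_poly0 big_ord0. Qed.

Lemma pmul2D p q (F : ser) i j : pmul2 (p + q) F i j = pmul2 p F i j + pmul2 q F i j.
Proof. by have := pmul2_linear 1 p q F i j; rewrite !rmorph1 mul1r scale1r. Qed.

Lemma pmul2Cl a p (F : ser) i j : pmul2 (pc a * p) F i j = a *: pmul2 p F i j.
Proof. by rewrite -[pc a * p]addr0 pmul2_linear pmul20 addr0. Qed.

Lemma pmul2N p (F : ser) i j : pmul2 (- p) F i j = - pmul2 p F i j.
Proof.
have -> : - p = pc (-1) * p by rewrite !rmorphN !rmorph1 mulN1r.
by rewrite pmul2Cl scaleN1r.
Qed.

Lemma pmul2B p q (F : ser) i j : pmul2 (p - q) F i j = pmul2 p F i j - pmul2 q F i j.
Proof. by rewrite pmul2D pmul2N. Qed.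

Lemma pmul21 (F : ser) i j : pmul2 1 F i j = F i j.
Proof.
rewrite (@pmul2_widen 1 1) ?size_poly1 // ?big_ord1 /=.
  by rewrite !coef1 /= scale1r !addr0.
by move=> k; rewrite coef1; case: (k == 0)%N; rewrite ?size_poly1 ?size_poly0.
Qed.

Lemma pmul2_natl (m : nat) p (F : ser) i j :
  pmul2 (m%:R * p) F i j = m%:R *: pmul2 p F i j.
Proof. by rewrite -pmul2Cl !rmorph_nat. Qed.

Lemma pmul2_nat (m : nat) (F : ser) i j : pmul2 m%:R F i j = m%:R *: F i j.
Proof. by rewrite -[m%:R]mulr1 pmul2_natl pmul21. Qed.

Lemma pmul2_Xl p (F : ser) i j : pmul2 (pu * p) F i j = pmul2 p F (i + 1) j.
Proof.
rewrite (@pmul2_widen (size p).+1 (inner_size p)); last first.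
- by move=> k; rewrite coefXM; case: (k == 0)%N; rewrite ?size_poly0 ?size_coef_inner_size.
- by apply/leq_sizeP => -[|k] //= k_ge; rewrite coefXM nth_default.
rewrite (@pmul2_widen (size p) (inner_size p)) //; last exact: size_coef_inner_size.
rewrite big_ord_recl /= coefXM eqxx big1 ?add0r; last by move=> l _; rewrite coef0 scale0r.
apply: eq_bigr => k _; apply: eq_bigr => l _; rewrite coefXM /=.
by congr (_ *: F _ _); rewrite /bump leq0n add1n; lia.
Qed.

Lemma pmul2_Xr p (F : ser) i j : pmul2 (pv * p) F i j = pmul2 p F i (j + 1).
Proof.
rewrite (@pmul2_widen (size p) (inner_size p).+1); last first.
- move=> k; rewrite coefCM (leq_trans (size_polyMleq _ _)) //.
  by rewrite size_polyX /= ltnS size_coef_inner_size.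
- by apply/leq_sizeP => k k_ge; rewrite coefCM nth_default ?mulr0.
rewrite (@pmul2_widen (size p) (inner_size p)) //; last exact: size_coef_inner_size.
apply: eq_bigr => k _; rewrite big_ord_recl /= coefCM coefXM eqxx scale0r add0r.
apply: eq_bigr => l _; rewrite coefXM /=.
by congr (_ *: F _ _); rewrite /bump leq0n add1n; lia.
Qed.

Lemma pmul2_zero p (F : ser) i j : (forall i j, F i j = 0) -> pmul2 p F i j = 0.
Proof. by move=> F0; apply: big1 => k _; apply: big1 => l _; rewrite F0 scaler0. Qed.

Lemma pmul2_sum p (I : Type) (r : seq I) (F : I -> ser) i j :
  pmul2 p (fun i j => \sum_(t <- r) F t i j) i j = \sum_(t <- r) pmul2 p (F t) i j.
Proof.
rewrite /pmul2 exchange_big; apply: eq_bigr => k _; rewrite exchange_big.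
by apply: eq_bigr => l _; rewrite scaler_sumr.
Qed.

Lemma pmul2MCl (c : {poly C}) q (F : ser) i j :
  pmul2 (c%:P * q) F i j = pmul2 c%:P (pmul2 q F) i j.
Proof.
elim/poly_ind: c q i j => [|c d IH] q i j; first by rewrite !rmorph0 mul0r !pmul20.
have -> : (c * 'X + d%:P)%:P * q = c%:P * (pv * q) + pc d * q.
  by rewrite rmorphD rmorphM /= mulrDl -mulrA (mulrC c%:P).
have -> : (c * 'X + d%:P)%:P = pv * c%:P + pc d * 1.
  by rewrite rmorphD rmorphM /= mulr1 mulrC.
rewrite !pmul2D IH !pmul2Cl pmul21 pmul2_Xr -[in RHS](addr0 i) -pmul2_shift addr0.
by congr (_ + _); apply: eq_pmul2 => i' j'; rewrite addr0 pmul2_Xr.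
Qed.

Lemma pmul2M p q (F : ser) i j : pmul2 (p * q) F i j = pmul2 p (pmul2 q F) i j.
Proof.
elim/poly_ind: p q i j => [|p c IH] q i j; first by rewrite mul0r !pmul20.
rewrite mulrDl -mulrA pmul2D IH pmul2MCl pmul2D (mulrC p) pmul2_Xl; congr (_ + _).
rewrite -[in RHS](addr0 j) -pmul2_shift.
by apply: eq_pmul2 => i' j'; rewrite addr0 pmul2_Xl.
Qed.

Lemma pmul2_polyC_eq0 (q : {poly C}) (H : ser) i j :
  (forall j, H i j = 0) -> pmul2 q%:P H i j = 0.
Proof.
move=> Hi0; rewrite (@pmul2_widen 1 (size q)) ?big_ord1.
- by apply: big1 => l _; rewrite addr0 Hi0 scaler0.
- by rewrite size_polyC leq_b1.
- by move=> k; rewrite coefC; case: (k == 0)%N; rewrite ?size_poly0.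
Qed.

Lemma pmul2_polyC_ser_vu (q : {poly C}) (g f : nat -> A) i j :
  pmul2 q%:P (ser_vu g f) i j = pmul1 q (ext g) j * ext f i.
Proof.
rewrite (@pmul2_widen 1 (size q)) ?big_ord1.
- rewrite /pmul1 mulr_suml; apply: eq_bigr => l _.
  by rewrite coefC eqxx /ser_vu addr0 scalerAl.
- by rewrite size_polyC leq_b1.
- by move=> k; rewrite coefC; case: (k == 0)%N; rewrite ?size_poly0.
Qed.

Definition vanishes_below (F : ser) : Prop :=
  exists m : int, forall i j, (i < m) || (j < m) -> F i j = 0.

Lemma ext_lt0 (f : nat -> A) i : i < 0 -> ext f i = 0.
Proof. by case: i. Qed.

Lemma vanishes_below_ser_uv (f g : nat -> A) : vanishes_below (ser_uv f g).
Proof. by exists 0 => i j /orP[] /ext_lt0; rewrite /ser_uv => ->; rewrite ?mul0r ?mulr0. Qed.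

Lemma vanishes_below_ser_vu (g f : nat -> A) : vanishes_below (ser_vu g f).
Proof. by exists 0 => i j /orP[] /ext_lt0; rewrite /ser_vu => ->; rewrite ?mul0r ?mulr0. Qed.

Lemma vanishes_below_pmul2 p (F : ser) :
  vanishes_below F -> vanishes_below (pmul2 p F).
Proof.
case=> m Fm; exists (m - (size p + inner_size p)%:Z) => i j ij_lt.
rewrite (@pmul2_widen (size p) (inner_size p)) //; last exact: size_coef_inner_size.
apply: big1 => k _; apply: big1 => l _; rewrite Fm ?scaler0 //.
move: ij_lt; have := ltn_ord k; have := ltn_ord l; clear; lia.
Qed.

Lemma pmul2_uD_eq0 (q : {poly C}) (H : ser) : vanishes_below H ->
  (forall i j, pmul2 (pu + q%:P) H i j = 0) -> forall i j, H i j = 0.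
Proof.
case=> m Hm eqH.
suff H0 (t : nat) i j : i < m + t%:Z -> H i j = 0.
  by move=> i j; apply: (H0 `|i - m|%N.+1); lia.
elim: t i j => [|t IH] i j lt_i; first by apply: Hm; rewrite -[m]addr0 lt_i.
have [|ge_i] := ltrP i (m + t%:Z); first exact: IH.
have := eqH (i - 1) j; rewrite pmul2D -[pu]mulr1 pmul2_Xl pmul21 subrK.
by rewrite pmul2_polyC_eq0 ?addr0 // => j'; apply: IH; lia.
Qed.

Lemma pmul2_vD_eq0 (a c : C) (H : ser) : a != 0 -> vanishes_below H ->
  (forall i j, pmul2 (pc a * pv + pc c) H i j = 0) -> forall i j, H i j = 0.
Proof.
move=> a_neq0 [m Hm] eqH.
suff H0 (t : nat) i j : j < m + t%:Z -> H i j = 0.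
  by move=> i j; apply: (H0 `|j - m|%N.+1); lia.
elim: t i j => [|t IH] i j lt_j; first by apply: Hm; rewrite -[m]addr0 lt_j orbT.
have [|ge_j] := ltrP j (m + t%:Z); first exact: IH.
have := eqH i (j - 1).
rewrite pmul2D pmul2Cl -[pc c]mulr1 -[pv]mulr1 pmul2Cl pmul2_Xr !pmul21 subrK.
rewrite [H i (j - 1)]IH ?scaler0 ?addr0; last by lia.
by move/eqP; rewrite scaler_eq0 (negbTE a_neq0) => /eqP.
Qed.

Definition lcomb (Fs : seq ser) (c : nat -> P) : ser :=
  fun i j => \sum_(t < size Fs) pmul2 (c t) (nth (fun _ _ => 0) Fs t) i j.

Lemma lcomb_cons F Fs c cs i j :
  lcomb (F :: Fs) (nth 0 (c :: cs)) i j = pmul2 c F i j + lcomb Fs (nth 0 cs) i j.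
Proof. by rewrite /lcomb big_ord_recl. Qed.

Lemma lcomb_cons_last F Fs c i j :
  lcomb (F :: Fs) (nth 0 [:: c]) i j = pmul2 c F i j.
Proof.
rewrite lcomb_cons /lcomb big1 ?addr0 // => t _.
by rewrite nth_nil pmul20.
Qed.

(* Zero coefficients are dropped with this lemma rather than by rewriting with
   [pmul20]: unifying two closed polynomials such as [0] and [1] of
   [{poly {poly C}}] does not terminate in practice.  For the same reason the
   proofs below generalize concrete coefficients before using the linearity
   lemmas of [pmul2]. *)
Lemma lcomb_cons0 F Fs cs i j :
  lcomb (F :: Fs) (nth 0 (0 :: cs)) i j = lcomb Fs (nth 0 cs) i j.
Proof. by rewrite lcomb_cons pmul20 add0r. Qed.

Lemma eq_lcomb Fs c d i j : (forall t, (t < size Fs)%N -> c t = d t) ->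
  lcomb Fs c i j = lcomb Fs d i j.
Proof. by move=> ecd; apply: eq_bigr => t _; rewrite ecd. Qed.

Lemma lcombD Fs c d i j :
  lcomb Fs c i j + lcomb Fs d i j = lcomb Fs (fun t => c t + d t) i j.
Proof. by rewrite /lcomb -big_split; apply: eq_bigr => t _; rewrite pmul2D. Qed.

Lemma lcomb_pmul2 r Fs c i j :
  pmul2 r (lcomb Fs c) i j = lcomb Fs (fun t => r * c t) i j.
Proof. by rewrite /lcomb pmul2_sum; apply: eq_bigr => t _; rewrite pmul2M. Qed.

Lemma lcomb_eq0_combine Fs c d (r r' : P) :
  (forall i j, lcomb Fs c i j = 0) -> (forall i j, lcomb Fs d i j = 0) ->
  forall i j, lcomb Fs (fun t => r * c t + r' * d t) i j = 0.
Proof.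
move=> c0 d0 i j; rewrite -lcombD -!lcomb_pmul2.
by rewrite !pmul2_zero ?addr0.
Qed.

Lemma vanishes_below_lcomb Fs c :
  (forall t, vanishes_below (nth (fun _ _ => 0) Fs t)) -> vanishes_below (lcomb Fs c).
Proof.
elim: Fs c => [|F Fs IH] c Fs_vb; first by exists 0 => i j _; rewrite /lcomb big_ord0.
have [m Fm] := @vanishes_below_pmul2 (c 0%N) F (Fs_vb 0%N : vanishes_below F).
have [m' Gm] := IH (fun t => c t.+1) (fun t => Fs_vb t.+1).
exists (Num.min m m') => i j ij_lt.
have -> : lcomb (F :: Fs) c i j = pmul2 (c 0%N) F i j + lcomb Fs (fun t => c t.+1) i j.
  by rewrite /lcomb big_ord_recl.
rewrite Fm ?Gm ?addr0 //; move: ij_lt; rewrite !lt_min;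
  by case: (i < m) (i < m') (j < m) (j < m') => [] [] [] [].
Qed.

End PolynomialAction.

Ltac decide_index_mask a b :=
  case=> [x1 x2] [y1 y2] [z1 z2]; case: a b => [a1 a2] [b1 b2];
  rewrite !mulnb; congr nat_of_bool; rewrite /bar /= ?xpair_eqE /=;
  apply/idP/idP => H;
  repeat match goal with
  | H : is_true (_ && _) |- _ => case/andP: H => ? ?
  | H : is_true (?x == ?y) |- _ => move/eqP: H => H; subst
  end; rewrite ?rev_ordK ?eqxx //=.

Section RSEntries.
Variables (R : realType) (A : algType (Cx R)) (n : nat)
  (s : 'I_(n.*2).+1 -> 'I_(n.*2).+1 -> nat -> A) (rho : Cx R).
Local Notation C := (Cx R).
Local Notation P := {poly {poly C}}.
Local Notation pu := ('X : P).
Local Notation pv := (('X : {poly C})%:P : P).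
Local Notation pc c := ((c : C)%:P%:P : P).
Local Notation Idx := ('I_(n.*2).+2 * 'I_(n.*2).+2)%type.
Local Notation D := (pu - pv).
Local Notation w := (- pu - pv - pc rho).
Local Notation S := (Sent s).

Definition sum3 (f : Idx -> Idx -> Idx -> A) : A :=
  \sum_(x : Idx) \sum_(y : Idx) \sum_(z : Idx) f x y z.

Lemma eq_sum3 f g : (forall x y z, f x y z = g x y z) -> sum3 f = sum3 g.
Proof. by move=> efg; apply: eq_bigr => x _; apply: eq_bigr => y _; apply: eq_bigr. Qed.

Lemma sum3D f g : sum3 (fun x y z => f x y z + g x y z) = sum3 f + sum3 g.
Proof.
rewrite /sum3 -big_split; apply: eq_bigr => x _; rewrite -big_split.
by apply: eq_bigr => y _; rewrite -big_split.
Qed.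

Lemma sum3N f : sum3 (fun x y z => - f x y z) = - sum3 f.
Proof.
rewrite /sum3 -sumrN; apply: eq_bigr => x _; rewrite -sumrN.
by apply: eq_bigr => y _; rewrite -sumrN.
Qed.

Lemma sum_indicator (T : finType) (c : T) (H : T -> A) :
  \sum_x (x == c)%:R *: H x = H c.
Proof.
rewrite (bigD1 c) //= eqxx scale1r big1 ?addr0 // => x /negbTE ->.
by rewrite scale0r.
Qed.

Lemma sum3_indicator (m : Idx -> Idx -> Idx -> nat) c1 c2 c3 G :
  (forall x y z, m x y z = [&& x == c1, y == c2 & z == c3] :> nat) ->
  sum3 (fun x y z => (m x y z)%:R *: G x y z) = G c1 c2 c3.
Proof.
move=> em.
transitivity (\sum_(x : Idx) (x == c1)%:R *: \sum_(y : Idx) (y == c2)%:R *: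
                \sum_(z : Idx) (z == c3)%:R *: G x y z).
  apply: eq_bigr => x _; rewrite scaler_sumr; apply: eq_bigr => y _.
  rewrite !scaler_sumr; apply: eq_bigr => z _.
  by rewrite em !scalerA -!natrM !mulnb andbA.
by rewrite !sum_indicator.
Qed.

Lemma RS_lhs_summand (a b x y z : Idx) (F : int -> int -> A) i j :
  pmul2 (Rc R a x * Rhc rho y z * (x.2 == y.2)%:R * (z.1 == b.1)%:R) F i j =
  ((x.2 == y.2) * (z.1 == b.1) * (a == x) * (y == z))%N%:R *: pmul2 (D * w) F i j
  - ((x.2 == y.2) * (z.1 == b.1) * (a == x) * ((y.2 == bar y.1) && (z.2 == bar z.1)))%N%:R
      *: pmul2 D F i j
  - ((x.2 == y.2) * (z.1 == b.1) * ((a.1 == x.2) && (a.2 == x.1)) * (y == z))%N%:R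
      *: pmul2 w F i j
  + ((x.2 == y.2) * (z.1 == b.1) * ((a.1 == x.2) && (a.2 == x.1))
      * ((y.2 == bar y.1) && (z.2 == bar z.1)))%N%:R *: F i j.
Proof.
set p := (_ * _ * _ * _).
have -> : p = ((x.2 == y.2) * (z.1 == b.1) * (a == x) * (y == z))%N%:R * (D * w)
  - ((x.2 == y.2) * (z.1 == b.1) * (a == x) * ((y.2 == bar y.1) && (z.2 == bar z.1)))%N%:R * D
  - ((x.2 == y.2) * (z.1 == b.1) * ((a.1 == x.2) && (a.2 == x.1)) * (y == z))%N%:R * w
  + ((x.2 == y.2) * (z.1 == b.1) * ((a.1 == x.2) && (a.2 == x.1))
      * ((y.2 == bar y.1) && (z.2 == bar z.1)))%N%:R.
  by rewrite /p /Rc /Rhc; ring.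
move: D w => D w.
by rewrite !pmul2D !pmul2N !pmul2_natl pmul2_nat.
Qed.

Lemma RS_rhs_summand (a b x y z : Idx) (F : int -> int -> A) i j :
  pmul2 ((a.1 == x.1)%:R * Rhc rho x y * (y.2 == z.2)%:R * Rc R z b) F i j =
  ((a.1 == x.1) * (y.2 == z.2) * (x == y) * (z == b))%N%:R *: pmul2 (w * D) F i j
  - ((a.1 == x.1) * (y.2 == z.2) * (x == y) * ((z.1 == b.2) && (z.2 == b.1)))%N%:R
      *: pmul2 w F i j
  - ((a.1 == x.1) * (y.2 == z.2) * ((x.2 == bar x.1) && (y.2 == bar y.1)) * (z == b))%N%:R
      *: pmul2 D F i j
  + ((a.1 == x.1) * (y.2 == z.2) * ((x.2 == bar x.1) && (y.2 == bar y.1))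
      * ((z.1 == b.2) && (z.2 == b.1)))%N%:R *: F i j.
Proof.
set p := (_ * _ * _ * _).
have -> : p = ((a.1 == x.1) * (y.2 == z.2) * (x == y) * (z == b))%N%:R * (w * D)
  - ((a.1 == x.1) * (y.2 == z.2) * (x == y) * ((z.1 == b.2) && (z.2 == b.1)))%N%:R * w
  - ((a.1 == x.1) * (y.2 == z.2) * ((x.2 == bar x.1) && (y.2 == bar y.1)) * (z == b))%N%:R * D
  + ((a.1 == x.1) * (y.2 == z.2) * ((x.2 == bar x.1) && (y.2 == bar y.1))
      * ((z.1 == b.2) && (z.2 == b.1)))%N%:R.
  by rewrite /p /Rc /Rhc; ring.
move: D w => D w.
by rewrite !pmul2D !pmul2N !pmul2_natl pmul2_nat.
Qed.

Lemma RS_lhs_entry a b i j :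
  \sum_(x : Idx) \sum_(y : Idx) \sum_(z : Idx)
     pmul2 (Rc R a x * Rhc rho y z * (x.2 == y.2)%:R * (z.1 == b.1)%:R)
           (ser_uv (S x.1 y.1) (S z.2 b.2)) i j
  = pmul2 (D * w) (ser_uv (S a.1 b.1) (S a.2 b.2)) i j
    - pmul2 D (ser_uv (S a.1 (bar a.2)) (S (bar b.1) b.2)) i j
    - pmul2 w (ser_uv (S a.2 b.1) (S a.1 b.2)) i j
    + ser_uv (S a.2 (bar a.1)) (S (bar b.1) b.2) i j.
Proof.
rewrite -[LHS]/(sum3 _); under eq_sum3 => x y z do rewrite RS_lhs_summand.
rewrite !sum3D !sum3N.
rewrite (@sum3_indicator _ a (b.1, a.2) (b.1, a.2)); last by decide_index_mask a b.
rewrite (@sum3_indicator _ a (bar a.2, a.2) (b.1, bar b.1)); last by decide_index_mask a b.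
rewrite (@sum3_indicator _ (a.2, a.1) (b.1, a.1) (b.1, a.1)); last by decide_index_mask a b.
rewrite (@sum3_indicator _ (a.2, a.1) (bar a.1, a.1) (b.1, bar b.1)) //.
by decide_index_mask a b.
Qed.

Lemma RS_rhs_entry a b i j :
  \sum_(x : Idx) \sum_(y : Idx) \sum_(z : Idx)
     pmul2 ((a.1 == x.1)%:R * Rhc rho x y * (y.2 == z.2)%:R * Rc R z b)
           (ser_vu (S a.2 x.2) (S y.1 z.1)) i j
  = pmul2 (w * D) (ser_vu (S a.2 b.2) (S a.1 b.1)) i j
    - pmul2 w (ser_vu (S a.2 b.1) (S a.1 b.2)) i j
    - pmul2 D (ser_vu (S a.2 (bar a.1)) (S (bar b.2) b.1)) i j
    + ser_vu (S a.2 (bar a.1)) (S (bar b.1) b.2) i j.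
Proof.
rewrite -[LHS]/(sum3 _); under eq_sum3 => x y z do rewrite RS_rhs_summand.
rewrite !sum3D !sum3N.
rewrite (@sum3_indicator _ (a.1, b.2) (a.1, b.2) b); last by decide_index_mask a b.
rewrite (@sum3_indicator _ (a.1, b.1) (a.1, b.1) (b.2, b.1)); last by decide_index_mask a b.
rewrite (@sum3_indicator _ (a.1, bar a.1) (bar b.2, b.2) b); last by decide_index_mask a b.
rewrite (@sum3_indicator _ (a.1, bar a.1) (bar b.1, b.1) (b.2, b.1)) //.
by decide_index_mask a b.
Qed.

End RSEntries.

Section TwistedRelation.
Variables (R : realType) (A : algType (Cx R)) (n : nat)
  (s : 'I_(n.*2).+1 -> 'I_(n.*2).+1 -> nat -> A) (rho : Cx R).
Hypotheses (RS : RS_relation s rho) (SY : symmetry_relation s rho).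
Variable k : 'I_(n.*2).+1.
Hypothesis k_lt_n : (k < n)%N.
Local Notation C := (Cx R).
Local Notation P := {poly {poly C}}.
Local Notation pu := ('X : P).
Local Notation pv := (('X : {poly C})%:P : P).
Local Notation pc c := ((c : C)%:P%:P : P).
Local Notation D := (pu - pv).
Local Notation w := (- pu - pv - pc rho).
Local Notation Q := (('X *+ 2 + rho%:P : {poly C})%:P : P).
Local Notation Q1 := (('X *+ 2 + (rho + 1)%:P : {poly C})%:P : P).
Local Notation nh := (inord n : 'I_(n.*2).+1).
Local Notation nh2 := (inord n : 'I_(n.*2).+2).
Local Notation k2 := (inord k : 'I_(n.*2).+2).
Local Notation K := (sser s k nh).
Local Notation Nn := (sser s nh nh).
Local Notation B := (sser s nh (alpha (bar k2))).

Lemma alpha_nh : alpha nh2 = nh.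
Proof. by rewrite /alpha inordK ?leqnn //; lia. Qed.

Lemma alpha_bar_nh : alpha (bar nh2) = nh.
Proof.
rewrite /alpha /bar /=; congr inord; rewrite inordK; last by lia.
have -> : ((n.*2).+2 - n.+1 = n.+1)%N by lia.
by rewrite ltnn.
Qed.

Lemma alpha_k : alpha k2 = k.
Proof. by rewrite /alpha inordK ?(ltnW k_lt_n) ?inord_val //; lia. Qed.

Lemma symmetry_ser_vu (a b : 'I_(n.*2).+2) (f : nat -> A) i j :
  pmul2 Q (ser_vu (stilde rho (Sent s (bar b) (bar a))) f) i j
  = pmul2 Q1 (ser_vu (Sent s a b) f) i j - ser_vu (stilde rho (Sent s a b)) f i j.
Proof. by rewrite !pmul2_polyC_ser_vu /ser_vu SY -mulrBl. Qed.

Let Fs := [:: ser_uv K Nn; ser_uv Nn K; ser_uv B Nn; ser_vu Nn K;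
              ser_vu B Nn; ser_vu K Nn; ser_vu (stilde rho K) Nn; ser_vu (stilde rho B) Nn].

Lemma vanishes_below_Fs t : vanishes_below (nth (fun _ _ => 0) Fs t).
Proof.
case: t => [|[|[|[|[|[|[|[|t]]]]]]]]; rewrite /= ?nth_nil;
  first [exact: vanishes_below_ser_uv | exact: vanishes_below_ser_vu | by exists 0].
Qed.

Lemma RS_k_nh_relation i j :
  lcomb Fs (nth 0 [:: D * w - D; - w; 1; - (w * D) + w; D - 1]) i j = 0.
Proof.
have := RS (k2, nh2) (nh2, nh2) i j.
rewrite RS_lhs_entry RS_rhs_entry /= /Sent alpha_nh alpha_bar_nh alpha_k.
rewrite /Fs 4!lcomb_cons lcomb_cons_last /=; move: D w => D w.
rewrite !pmul2B !pmul2D !pmul2N !pmul21 => /eqP; rewrite -subr_eq0 => /eqP <-.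
by rewrite !opprD !opprK !addrA.
Qed.

Lemma RS_nh_k_relation i j :
  lcomb Fs (nth 0 [:: - w + 1; D * w; - D; 0; 0; - (w * D) + w + D - 1]) i j = 0.
Proof.
have := RS (nh2, k2) (nh2, nh2) i j.
rewrite RS_lhs_entry RS_rhs_entry /= /Sent alpha_nh alpha_bar_nh alpha_k.
rewrite /Fs 3!lcomb_cons 2!lcomb_cons0 lcomb_cons_last /=.
move: D w => D w.
rewrite !pmul2B !pmul2D !pmul2N !pmul21 => /eqP; rewrite -subr_eq0 => /eqP <-.
by rewrite !opprD !opprK !addrA [LHS](ACl (3*4*1*2*5*6*7*8))%AC.
Qed.

Lemma symmetry_k_nh_relation i j :
  lcomb Fs (nth 0 [:: 0; 0; 0; 0; 0; Q1; -1; - Q]) i j = 0.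
Proof.
have := symmetry_ser_vu k2 nh2 Nn i j; rewrite /Sent alpha_k alpha_nh alpha_bar_nh => eQ.
rewrite /Fs 5!lcomb_cons0 2!lcomb_cons lcomb_cons_last /= !pmul2N pmul21 eQ.
by rewrite opprB addKr subrr.
Qed.

Lemma symmetry_nh_kbar_relation i j :
  lcomb Fs (nth 0 [:: 0; 0; 0; 0; Q1; 0; - Q; -1]) i j = 0.
Proof.
have := symmetry_ser_vu nh2 (bar k2) Nn i j.
rewrite /Sent {1}/bar rev_ordK alpha_k alpha_nh alpha_bar_nh => eQ.
rewrite /Fs 4!lcomb_cons0 lcomb_cons lcomb_cons0 lcomb_cons lcomb_cons_last /=.
rewrite !pmul2N pmul21 eQ; move: (pmul2 _ _ i j) (ser_vu _ _ i j) => a z.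
by rewrite opprB addrAC subrr add0r subrr.
Qed.

Lemma exchange_relation i j :
  lcomb Fs (nth 0 [:: (w - 1) * (D + 1); 0; 0; - (D * w); D; - (w - 1)]) i j = 0.
Proof.
move: i j; apply: (@pmul2_uD_eq0 _ _ (- 'X - 1)).
  exact: (vanishes_below_lcomb _ vanishes_below_Fs).
move=> i j; rewrite lcomb_pmul2.
rewrite (@eq_lcomb _ _ _ _ (fun t => D * nth 0 [:: D * w - D; - w; 1; - (w * D) + w; D - 1] t
  + 1 * nth 0 [:: - w + 1; D * w; - D; 0; 0; - (w * D) + w + D - 1] t)).
  exact: (lcomb_eq0_combine _ _ RS_k_nh_relation RS_nh_k_relation).
by case=> [|[|[|[|[|[|[|[|t]]]]]]]] //= _; ring.
Qed.

Lemma symmetry_elimination_relation i j :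
  lcomb Fs (nth 0 [:: 0; 0; 0; 0; Q; -1; 1 - Q]) i j = 0.
Proof.
move: i j; apply: (@pmul2_vD_eq0 _ _ 2 (rho + 1)).
- by rewrite pnatr_eq0.
- exact: (vanishes_below_lcomb _ vanishes_below_Fs).
move=> i j; rewrite lcomb_pmul2.
rewrite (@eq_lcomb _ _ _ _ (fun t => Q * nth 0 [:: 0; 0; 0; 0; Q1; 0; - Q; -1] t
  + (-1) * nth 0 [:: 0; 0; 0; 0; 0; Q1; -1; - Q] t)).
  exact: (lcomb_eq0_combine _ _ symmetry_nh_kbar_relation symmetry_k_nh_relation).
by case=> [|[|[|[|[|[|[|[|t]]]]]]]] //= _; ring.
Qed.

Lemma twisted_relation i j :
  pmul2 ((pu - pv) * (pu + pv + pc rho) * (pv *+ 2 + pc rho)) (ser_vu Nn K) i j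
  = pmul2 ((pu - pv + 1) * (pu + pv + pc (rho + 1)) * (pv *+ 2 + pc rho))
          (ser_uv K Nn) i j
    - pmul2 ((pu + pv + pc rho) * (pv *+ 2 + pc (rho + 1))) (ser_vu K Nn) i j
    - pmul2 ((pu - pv) * (pv *+ 2 + pc (rho - 1))) (ser_vu (stilde rho K) Nn) i j.
Proof.
have := lcomb_eq0_combine D (- Q) symmetry_elimination_relation exchange_relation i j.
rewrite (@eq_lcomb _ _ _ _ (nth 0
  [:: (pu - pv + 1) * (pu + pv + pc (rho + 1)) * (pv *+ 2 + pc rho); 0; 0;
      - ((pu - pv) * (pu + pv + pc rho) * (pv *+ 2 + pc rho)); 0;
      - ((pu + pv + pc rho) * (pv *+ 2 + pc (rho + 1)));
      - ((pu - pv) * (pv *+ 2 + pc (rho - 1)))])); last first.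
  by case=> [|[|[|[|[|[|[|[|t]]]]]]]] //= _; ring.
rewrite /Fs lcomb_cons 2!lcomb_cons0 lcomb_cons lcomb_cons0 lcomb_cons lcomb_cons_last /=.
rewrite !pmul2N; move: (pmul2 _ _ i j) (pmul2 _ _ i j) (pmul2 _ _ i j) (pmul2 _ _ i j).
by move=> a b c d /eqP; rewrite addrCA addr_eq0 eqr_opp addrA => /eqP ->.
Qed.

End TwistedRelation.

(* The hypothesis [0 < n] is implied by [k < n]. *)
Theorem mainTheorem2 (R : realType) (A : algType (Cx R)) (n : nat)
  (s : 'I_(n.*2).+1 -> 'I_(n.*2).+1 -> nat -> A) (rho : Cx R) :
  (0 < n)%N ->
  RS_relation s rho ->
  symmetry_relation s rho ->
  forall (k : 'I_(n.*2).+1), (k < n)%N ->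
  let nh : 'I_(n.*2).+1 := inord n in
  let pu := ('X : {poly {poly Cx R}}) in
  let pv := (('X : {poly Cx R})%:P : {poly {poly Cx R}}) in
  let pc := fun c : Cx R => (c%:P%:P : {poly {poly Cx R}}) in
  forall i j : int,
    pmul2 ((pu - pv) * (pu + pv + pc rho) * (pv *+ 2 + pc rho))
          (ser_vu (sser s nh nh) (sser s k nh)) i j
  = pmul2 ((pu - pv + 1) * (pu + pv + pc (rho + 1)) * (pv *+ 2 + pc rho))
          (ser_uv (sser s k nh) (sser s nh nh)) i j
    - pmul2 ((pu + pv + pc rho) * (pv *+ 2 + pc (rho + 1)))
          (ser_vu (sser s k nh) (sser s nh nh)) i j
    - pmul2 ((pu - pv) * (pv *+ 2 + pc (rho - 1)))
          (ser_vu (stilde rho (sser s k nh)) (sser s nh nh)) i j.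
Proof. by move=> _ RS SY k k_lt_n /= i j; exact: (twisted_relation RS SY k_lt_n). Qed.
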